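(* Let $(X,d)$ be a uniformly convex geodesic metric space. Then every closed convex pair $(A,B)$ of subsets of $X$ has proximal normal structure.
   Context: A geodesic space is one in which any two points are joined by a geodesic segment; a subset is convex if it contains every geodesic segment joining two of its points. A point $m$ is a midpoint of $x,y$ if $d(x,m)=d(m,y)=d(x,y)/2$. $X$ is uniformly convex if for every $r>0$ and $\varepsilon\in(0,2]$ there is $\delta\in(0,1]$ such that for all $a,x,y\in X$ with $d(x,a)\le r$, $d(y,a)\le r$, $d(x,y)\ge\varepsilon r$, one has $d(m,a)\le(1-\delta)r$ for any midpoint $m$ of $x,y$. Notation: $\operatorname{dist}(A,B)=\inf\{d(x,y):x\in A,y\in B\}$, $\delta(x,A)=\sup\{d(x,y):y\in A\}$, $\delta(A,B)=\sup\{d(x,y):x\in A,y\in B\}$. A pair $(H_1,H_2)$ is proximal if for every $(a,b)\in H_1\times H_2$ there is $(a',b')\in H_1\times H_2$ with $d(a,b')=d(a',b)=\operatorname{dist}(H_1,H_2)$. A convex pair $(K_1,K_2)$ has proximal normal structure if for every closed bounded convex proximal pair $(H_1,H_2)$ with $H_1\subseteq K_1$, $H_2\subseteq K_2$, $\operatorname{dist}(H_1,H_2)=\operatorname{dist}(K_1,K_2)$ and $\delta(H_1,H_2)>\operatorname{dist}(H_1,H_2)$, there exists $(x_1,x_2)\in H_1\times H_2$ with $\delta(x_1,H_2)<\delta(H_1,H_2)$ and $\delta(x_2,H_1)<\delta(H_1,H_2)$. *)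

From Stdlib Require Import Reals.
From Coquelicot Require Import Coquelicot.
Open Scope R_scope.

Section MetricDefs.
Context {X : Type} (d : X -> X -> R).

Definition is_metric : Prop :=
  (forall x y, 0 <= d x y) /\
  (forall x y, d x y = 0 <-> x = y) /\
  (forall x y, d x y = d y x) /\
  (forall x y z, d x z <= d x y + d y z).

Definition geodesic (c : R -> X) (x y : X) : Prop :=
  c 0 = x /\ c (d x y) = y /\
  forall s t, 0 <= s <= d x y -> 0 <= t <= d x y -> d (c s) (c t) = Rabs (s - t).

Definition geodesic_space : Prop :=
  forall x y, exists c, geodesic c x y.

Definition mconvex (A : X -> Prop) : Prop :=
  forall x y c, A x -> A y -> geodesic c x y ->
    forall t, 0 <= t <= d x y -> A (c t).

Definition midpoint (x y m : X) : Prop :=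
  d x m = d x y / 2 /\ d m y = d x y / 2.

Definition uniformly_convex : Prop :=
  forall r eps, 0 < r -> 0 < eps <= 2 ->
    exists delta, 0 < delta <= 1 /\
      forall a x y m, d x a <= r -> d y a <= r -> eps * r <= d x y ->
        midpoint x y m -> d m a <= (1 - delta) * r.

Definition mclosed (A : X -> Prop) : Prop :=
  forall x, (forall e, 0 < e -> exists a, A a /\ d x a < e) -> A x.

Definition mbounded (A : X -> Prop) : Prop :=
  exists x0 r, forall a, A a -> d x0 a <= r.

Definition dist_set (A B : X -> Prop) : Rbar :=
  Glb_Rbar (fun r => exists x y, A x /\ B y /\ r = d x y).

Definition diam_pt (x : X) (A : X -> Prop) : Rbar :=
  Lub_Rbar (fun r => exists y, A y /\ r = d x y).

Definition diam_set (A B : X -> Prop) : Rbar :=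
  Lub_Rbar (fun r => exists x y, A x /\ B y /\ r = d x y).

Definition proximal_pair (H1 H2 : X -> Prop) : Prop :=
  forall a b, H1 a -> H2 b ->
    exists a' b', H1 a' /\ H2 b' /\
      Finite (d a b') = dist_set H1 H2 /\ Finite (d a' b) = dist_set H1 H2.

Definition proximal_normal_structure (K1 K2 : X -> Prop) : Prop :=
  forall H1 H2 : X -> Prop,
    mclosed H1 -> mclosed H2 -> mbounded H1 -> mbounded H2 ->
    mconvex H1 -> mconvex H2 -> proximal_pair H1 H2 ->
    (forall x, H1 x -> K1 x) -> (forall x, H2 x -> K2 x) ->
    dist_set H1 H2 = dist_set K1 K2 ->
    Rbar_lt (dist_set H1 H2) (diam_set H1 H2) ->
    exists x1 x2, H1 x1 /\ H2 x2 /\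
      Rbar_lt (diam_pt x1 H2) (diam_set H1 H2) /\
      Rbar_lt (diam_pt x2 H1) (diam_set H1 H2).

End MetricDefs.

(* Let dl be the (finite) diameter of the pair (H1, H2). If H1 were a single
   point, proximality would make every distance between H1 and H2 equal to
   dist(H1, H2), contradicting dist < dl. So H1 contains two distinct points
   x, x'; any z in H2 lies within dl of both, hence d(x, x') <= 2 dl, and
   uniform convexity at radius dl with eps = d(x, x') / dl puts their
   midpoint m (in H1 by convexity) within (1 - delta) dl of every z in H2.
   The same argument with the roles swapped gives the point of H2. *)
From Stdlib Require Import Reals Lra Classical.
From Coquelicot Require Import Coquelicot.
Open Scope R_scope.

Lemma Lub_Rbar_le_Finite (E : R -> Prop) (M : R) :
  (forall r, E r -> r <= M) -> Rbar_le (Lub_Rbar E) (Finite M).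
Proof.
  intros HM. apply (proj2 (Lub_Rbar_correct E)). intros r Hr. exact (HM r Hr).
Qed.

Lemma Lub_Rbar_ge (E : R -> Prop) (r : R) : E r -> Rbar_le (Finite r) (Lub_Rbar E).
Proof. intros Hr. exact (proj1 (Lub_Rbar_correct E) r Hr). Qed.

Section ProximalNormalStructure.

Variables (X : Type) (d : X -> X -> R).

Lemma diam_set_nonempty (A B : X -> Prop) (r : Rbar) :
  Rbar_lt r (diam_set d A B) -> exists a b, A a /\ B b.
Proof.
  intros Hlt. apply NNPP. intros Hempty.
  assert (Hbot : Rbar_le (diam_set d A B) m_infty).
  { apply (proj2 (Lub_Rbar_correct _)). intros s [a [b [Ha [Hb _]]]].
    exfalso. apply Hempty. now exists a, b. }
  pose proof (Rbar_lt_le_trans _ _ _ Hlt Hbot) as Hbelow.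
  destruct r; exact Hbelow.
Qed.

Lemma diam_set_ge (A B : X -> Prop) (a b : X) :
  A a -> B b -> Rbar_le (Finite (d a b)) (diam_set d A B).
Proof. intros Ha Hb. apply Lub_Rbar_ge. now exists a, b. Qed.

Hypothesis d_metric : is_metric d.

Lemma diam_set_sym (A B : X -> Prop) : diam_set d B A = diam_set d A B.
Proof.
  destruct d_metric as [_ [_ [d_sym _]]].
  apply Lub_Rbar_eqset. intros r.
  split; intros [x [y [Hx [Hy ->]]]]; exists y, x; rewrite d_sym; auto.
Qed.

Lemma dist_set_sym (A B : X -> Prop) : dist_set d B A = dist_set d A B.
Proof.
  destruct d_metric as [_ [_ [d_sym _]]].
  apply Glb_Rbar_eqset. intros r.
  split; intros [x [y [Hx [Hy ->]]]]; exists y, x; rewrite d_sym; auto.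
Qed.

Lemma proximal_pair_sym (A B : X -> Prop) :
  proximal_pair d A B -> proximal_pair d B A.
Proof.
  destruct d_metric as [_ [_ [d_sym _]]].
  intros Hprox b a Hb Ha. rewrite dist_set_sym.
  destruct (Hprox a b Ha Hb) as [a' [b' [Ha' [Hb' [Eab' Ea'b]]]]].
  exists b', a'. rewrite (d_sym b a'), (d_sym b' a). auto.
Qed.

Lemma diam_set_finite (A B : X -> Prop) (a b : X) :
  mbounded d A -> mbounded d B -> A a -> B b ->
  exists dl, diam_set d A B = Finite dl.
Proof.
  destruct d_metric as [_ [_ [d_sym d_tri]]].
  intros [x0 [r1 Hr1]] [y0 [r2 Hr2]] Ha Hb.
  assert (Hup : Rbar_le (diam_set d A B) (Finite (r1 + d x0 y0 + r2))).
  { apply Lub_Rbar_le_Finite. intros r [x [y [Hx [Hy ->]]]].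
    specialize (Hr1 x Hx). specialize (Hr2 y Hy).
    pose proof (d_tri x x0 y). pose proof (d_tri x0 y0 y).
    rewrite (d_sym x x0) in *. lra. }
  pose proof (diam_set_ge A B a b Ha Hb) as Hlow.
  destruct (diam_set d A B) as [dl | |]; simpl in *; try contradiction.
  now exists dl.
Qed.

(* Proximality makes a one-point [A] see all of [B] at distance [dist A B]. *)
Lemma diam_set_le_dist_set_of_subsingleton (A B : X -> Prop) :
  proximal_pair d A B -> (forall x x', A x -> A x' -> x = x') ->
  Rbar_le (diam_set d A B) (dist_set d A B).
Proof.
  intros Hprox Hsub. apply (proj2 (Lub_Rbar_correct _)).
  intros r [x [y [Hx [Hy ->]]]].
  destruct (Hprox x y Hx Hy) as [a' [_ [Ha' [_ [_ Ea'y]]]]].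
  rewrite <- (Hsub a' x Ha' Hx), <- Ea'y. apply Rbar_le_refl.
Qed.

Lemma convex_midpoint (H : X -> Prop) (x x' : X) :
  geodesic_space d -> mconvex d H -> H x -> H x' ->
  exists m, H m /\ midpoint d x x' m.
Proof.
  intros Hgeo Hcv Hx Hx'.
  destruct (Hgeo x x') as [c Hc]. pose proof Hc as [Hc0 [Hc1 Hciso]].
  pose proof (proj1 d_metric x x') as HD.
  unfold midpoint. set (D := d x x') in *.
  exists (c (D / 2)). split.
  - apply (Hcv x x' c Hx Hx' Hc). fold D. lra.
  - split.
    + rewrite <- Hc0 at 1. rewrite Hciso by lra. rewrite Rabs_left1; lra.
    + rewrite <- Hc1 at 1. rewrite Hciso by lra. rewrite Rabs_left1; lra.
Qed.

Lemma uniformly_convex_midpoint_diam_pt_lt (H K : X -> Prop) (dl : R) (z0 x x' : X) :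
  geodesic_space d -> uniformly_convex d -> mconvex d H ->
  (forall a b, H a -> K b -> d a b <= dl) -> K z0 ->
  H x -> H x' -> x <> x' ->
  exists m, H m /\ Rbar_lt (diam_pt d m K) (Finite dl).
Proof.
  destruct d_metric as [d_pos [d_zero [d_sym d_tri]]].
  intros Hgeo Huc Hcv Hdl Hz0 Hx Hx' Hne.
  assert (HD0 : 0 < d x x').
  { destruct (d_pos x x') as [Hlt | Heq]; [exact Hlt |].
    exfalso. apply Hne, d_zero. auto. }
  assert (HD2 : d x x' <= 2 * dl).
  { pose proof (d_tri x z0 x'). rewrite (d_sym z0 x') in *.
    pose proof (Hdl x z0 Hx Hz0). pose proof (Hdl x' z0 Hx' Hz0). lra. }
  assert (Hdl0 : 0 < dl) by lra.
  assert (Heps : 0 < d x x' / dl <= 2).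
  { split; [apply Rdiv_lt_0_compat; lra | apply Rle_div_l; lra]. }
  destruct (Huc dl (d x x' / dl) Hdl0 Heps) as [del [Hdel Hunif]].
  destruct (convex_midpoint H x x' Hgeo Hcv Hx Hx') as [m [Hm Hmid]].
  exists m. split; [exact Hm |].
  apply Rbar_le_lt_trans with (Finite ((1 - del) * dl)); [| simpl; nra].
  apply Lub_Rbar_le_Finite. intros r [z [Hz ->]].
  apply (Hunif z x x' m); auto.
  - rewrite d_sym. auto.
  - rewrite d_sym. auto.
  - right. field. lra.
Qed.

Lemma proximal_pair_center (H K : X -> Prop) (dl : R) (z0 : X) :
  geodesic_space d -> uniformly_convex d -> mconvex d H -> proximal_pair d H K ->
  K z0 -> diam_set d H K = Finite dl -> Rbar_lt (dist_set d H K) (Finite dl) ->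
  exists m, H m /\ Rbar_lt (diam_pt d m K) (Finite dl).
Proof.
  intros Hgeo Huc Hcv Hprox Hz0 Hdiam Hlt.
  destruct (classic (exists x x', H x /\ H x' /\ x <> x'))
    as [[x [x' [Hx [Hx' Hne]]]] | Hsub].
  - apply (uniformly_convex_midpoint_diam_pt_lt H K dl z0 x x'); auto.
    intros a b Ha Hb. pose proof (diam_set_ge H K a b Ha Hb) as Hab.
    rewrite Hdiam in Hab. exact Hab.
  - exfalso. apply (Rbar_lt_not_le _ _ Hlt). rewrite <- Hdiam.
    apply diam_set_le_dist_set_of_subsingleton; [exact Hprox |].
    intros x x' Hx Hx'. apply NNPP. intros Hne. apply Hsub. now exists x, x'.
Qed.

End ProximalNormalStructure.

Theorem mainTheorem4 (X : Type) (d : X -> X -> R)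
  (Hmet : is_metric d) (Hgeo : geodesic_space d) (Huc : uniformly_convex d)
  (A B : X -> Prop) :
  mclosed d A -> mclosed d B -> mconvex d A -> mconvex d B ->
  proximal_normal_structure d A B.
Proof.
  intros _ _ _ _ H1 H2 _ _ Hbd1 Hbd2 Hcv1 Hcv2 Hprox _ _ _ Hlt.
  destruct (diam_set_nonempty X d H1 H2 _ Hlt) as [a [b [Ha Hb]]].
  destruct (diam_set_finite X d Hmet H1 H2 a b Hbd1 Hbd2 Ha Hb) as [dl Hdl].
  rewrite Hdl in *.
  destruct (proximal_pair_center X d Hmet H1 H2 dl b Hgeo Huc Hcv1 Hprox Hb Hdl Hlt)
    as [x1 [Hx1 Hlt1]].
  rewrite <- (dist_set_sym X d Hmet) in Hlt.
  rewrite <- (diam_set_sym X d Hmet) in Hdl.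
  destruct (proximal_pair_center X d Hmet H2 H1 dl a Hgeo Huc Hcv2
              (proximal_pair_sym X d Hmet H1 H2 Hprox) Ha Hdl Hlt) as [x2 [Hx2 Hlt2]].
  now exists x1, x2.
Qed.
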